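(* (a) Suppose $\mathbf{x}=(x_s)\in\mathbb{C}^{\mathbb{Z}^2}$ satisfies $Q^C(\mathbf{x})=0$ for all unit squares $C$, satisfies $\prod_{C\ni v}Q^C_v(\mathbf{x})=-\prod_{S\ni v}(x_v+x_{v_1})$ for all $v\in\mathbb{Z}^2$, and satisfies $x_v+x_{v+e_i}\neq0$ for all $v\in\mathbb{Z}^2$, $i\in\{1,2\}$. Then $\mathbf{x}$ extends to an array $\tilde{\mathbf{x}}=(x_s)\in\mathbb{C}^{\mathbb{Z}^2\cup E}$ such that for all $v\in\mathbb{Z}^2$, writing $z_{ij}=x_{v+(i,j)}$, $$z_{11}=3z_{00}+z_{10}+z_{01}+2\sqrt2\,z_{\frac120}z_{0\frac12},\quad z_{\frac121}=z_{\frac120}+\sqrt2\,z_{0\frac12},\quad z_{1\frac12}=z_{0\frac12}+\sqrt2\,z_{\frac120},$$ $$z_{\frac120}^2=z_{00}+z_{10},\qquad z_{0\frac12}^2=z_{00}+z_{01}.$$ (b) Conversely, if $\tilde{\mathbf{x}}=(x_s)\in\mathbb{C}^{\mathbb{Z}^2\cup E}$ satisfies these five equations for all $v\in\mathbb{Z}^2$, then its restriction $\mathbf{x}$ to $\mathbb{Z}^2$ satisfies $Q^C(\mathbf{x})=0$ for all unit squares $C$ and $\prod_{C\ni v}Q^C_v(\mathbf{x})=-\prod_{S\ni v}(x_v+x_{v_1})$ for all $v\in\mathbb{Z}^2$.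
   Context: $e_1=(1,0)$, $e_2=(0,1)$; $E=\mathbb{Z}^2+\{(\frac12,0),(0,\frac12)\}$ is the set of midpoints of unit edges. For a unit square $C$ with vertex values $z_{00},z_{10},z_{01},z_{11}$ (via $C\cong\{0,1\}^2$), $Q^C(\mathbf{x})=z_{00}^2+z_{10}^2+z_{01}^2+z_{11}^2-2(z_{00}z_{10}+z_{10}z_{11}+z_{11}z_{01}+z_{01}z_{00})-6(z_{00}z_{11}+z_{10}z_{01})$; for a vertex $v$ of $C$ with labeling chosen so that $z_{00}=x_v$, $Q^C_v(\mathbf{x})=\frac{1}{2\sqrt2}(z_{11}-z_{10}-z_{01}-3z_{00})$. In the products, $C$ ranges over the $4$ unit squares containing $v$ and $S$ over the $4$ unit edges containing $v$, $v_1$ being the other endpoint of $S$. *)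

From mathcomp Require Import all_boot all_algebra.
From mathcomp.real_closed Require Import complex.
From mathcomp Require Import Rstruct.
Set Implicit Arguments. Unset Strict Implicit. Unset Printing Implicit Defensive.
Import GRing.Theory Num.Theory.
Local Open Scope ring_scope.

Definition CC : numClosedFieldType := (Rdefinitions.R)[i].

Definition sqrt2 : CC := sqrtC 2.

Definition QC (x : int -> int -> CC) (a b : int) : CC :=
  let z00 := x a b in let z10 := x (a+1) b in
  let z01 := x a (b+1) in let z11 := x (a+1) (b+1) in
  z00^+2 + z10^+2 + z01^+2 + z11^+2
  - 2 * (z00 * z10 + z10 * z11 + z11 * z01 + z01 * z00)
  - 6 * (z00 * z11 + z10 * z01).

(* Q^C_v for v = (a,b) and C the unit square with vertices v, v+(s,0),
   v+(0,t), v+(s,t), with s,t in {1,-1}: z00 = x_v, z10,z01 the two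
   neighbours of v in C, z11 the vertex of C opposite to v. *)
Definition QCv (x : int -> int -> CC) (a b s t : int) : CC :=
  (x (a+s) (b+t) - x (a+s) b - x a (b+t) - 3 * x a b) / (2 * sqrt2).

Definition prodQv (x : int -> int -> CC) (a b : int) : CC :=
  QCv x a b 1 1 * QCv x a b (-1) 1 * QCv x a b 1 (-1) * QCv x a b (-1) (-1).

Definition prodEdges (x : int -> int -> CC) (a b : int) : CC :=
  (x a b + x (a+1) b) * (x a b + x (a-1) b)
  * (x a b + x a (b+1)) * (x a b + x a (b-1)).

(* An array on Z^2 \cup E is encoded in doubled coordinates:
   xt p q = x_{(p/2, q/2)} for integers p, q not both odd (values at
   p, q both odd are irrelevant).  Its restrZ2ion to Z^2: *)
Definition restrZ2 (xt : int -> int -> CC) : int -> int -> CC :=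
  fun a b => xt (2*a) (2*b).

Definition five_eqs (xt : int -> int -> CC) (a b : int) : Prop :=
  let z00 := xt (2*a) (2*b) in let z10 := xt (2*a+2) (2*b) in
  let z01 := xt (2*a) (2*b+2) in let z11 := xt (2*a+2) (2*b+2) in
  let zh0 := xt (2*a+1) (2*b) in let z0h := xt (2*a) (2*b+1) in
  let zh1 := xt (2*a+1) (2*b+2) in let z1h := xt (2*a+2) (2*b+1) in
  [/\ z11 = 3 * z00 + z10 + z01 + 2 * sqrt2 * zh0 * z0h,
      zh1 = zh0 + sqrt2 * z0h,
      z1h = z0h + sqrt2 * zh0,
      zh0 ^+ 2 = z00 + z10
    & z0h ^+ 2 = z00 + z01].

(* In a unit square let u, w be the half-edge values on the bottom and left edges, so that
   u^2 and w^2 are the corresponding edge sums.  The five equations say that Q^C_v = u w at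
   the lower-left corner v and that the top and right values are u + sqrt2 w and
   w + sqrt2 u; substituting, Q^C = 0 and the corner values at the other three corners are
   minus the products of the adjacent half-edge values, which gives (b).
   For (a), Q^C = 0 says (Q^C_v)^2 = (x_v + x_{v+e1}) (x_v + x_{v+e2}), so a row of squares
   is solved by propagating the vertical half-edge values to the right and, up to the sign
   of a square root, to the left.  For solutions of two consecutive rows, the vertex
   identity at a common vertex equates the products, over two neighbouring columns, of the
   top values predicted by the lower row and of the actual values of the upper row; all of
   them are determined up to sign, so they agree at every column or at none.  Choosing the
   sign of each row in turn glues the rows together. *)

From mathcomp Require Import all_boot all_algebra.
From mathcomp.real_closed Require Import complex.
From mathcomp Require Import Rstruct ring.
Import GRing.Theory Num.Theory.
Local Open Scope ring_scope.
Set Implicit Arguments. Unset Strict Implicit.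

Lemma NegzS_add1 (n : nat) : Negz n.+1 + 1 = Negz n.
Proof. by rewrite !NegzE -[n.+2]addn1 PoszD opprD addrNK. Qed.

Section SignChain.
Variables (V : Type) (opp : V -> V) (P : int -> V -> Prop)
  (compat : int -> V -> V -> bool) (y : int -> V).
Hypotheses (P_opp : forall a u, P a u -> P a (opp u))
  (Py : forall a, P a (y a))
  (compat_sign : forall a u u', P a u -> P (a + 1) u' ->
     compat a u u' || compat a u (opp u'))
  (compat_opp : forall a u u', compat a u (opp u') -> compat a (opp u) u').

Definition sign_next a u :=
  if compat a u (y (a + 1)) then y (a + 1) else opp (y (a + 1)).
Definition sign_prev a u' := if compat a (y a) u' then y a else opp (y a).

(* [chain_neg n] is the value at [- n]. *)
Fixpoint chain_pos n := if n is m.+1 then sign_next m (chain_pos m) else y 0.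
Fixpoint chain_neg n := if n is m.+1 then sign_prev (Negz m) (chain_neg m) else y 0.

Definition sign_chain a :=
  match a with Posz n => chain_pos n | Negz n => chain_neg n.+1 end.

Lemma sign_nextP a u :
  P a u -> P (a + 1) (sign_next a u) /\ compat a u (sign_next a u).
Proof.
rewrite /sign_next => Pu; have := compat_sign Pu (Py (a + 1)).
by case: ifP => [|_ /= ->]; split=> //; apply: P_opp.
Qed.

Lemma sign_prevP a u' :
  P (a + 1) u' -> P a (sign_prev a u') /\ compat a (sign_prev a u') u'.
Proof.
rewrite /sign_prev => Pu'; have := compat_sign (Py a) Pu'.
by case: ifP => [//|_ /= /compat_opp]; split=> //; exact: P_opp.
Qed.

Lemma sign_chain_Negz_add1 n : sign_chain (Negz n + 1) = chain_neg n.
Proof. by case: n => // n; rewrite NegzS_add1. Qed.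

Lemma sign_chainP a :
  P a (sign_chain a) /\ compat a (sign_chain a) (sign_chain (a + 1)).
Proof.
have Ppos (n : nat) : P n (chain_pos n).
  by elim: n => //= n IH; have [] := sign_nextP IH; rewrite -PoszD addn1.
have Pneg (n : nat) : P (Negz n + 1) (chain_neg n).
  elim: n => [|n IH] /=; first exact: Py.
  by rewrite NegzS_add1; case: (sign_prevP IH).
case: a => n /=; first by have [] := sign_nextP (Ppos n); rewrite -PoszD addn1.
by rewrite sign_chain_Negz_add1; case: (sign_prevP (Pneg n)).
Qed.
End SignChain.

Local Notation s := sqrt2.

Lemma sqrt2_sqr : s ^+ 2 = 2.
Proof. exact: sqrtCK. Qed.

Lemma sqrt2_neq0 : s != 0.
Proof. by apply: contra_eqN sqrt2_sqr => /eqP->; rewrite expr0n eq_sym pnatr_eq0. Qed.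

Lemma two_neq0 : 2 != 0 :> CC.
Proof. by rewrite pnatr_eq0. Qed.

Definition eH (x : int -> int -> CC) a b := x a b + x (a + 1) b.
Definition eV (x : int -> int -> CC) a b := x a b + x a (b + 1).

Lemma QCv11E x a b c : QCv x a b 1 1 = c <->
  x (a + 1) (b + 1) = 3 * x a b + x (a + 1) b + x a (b + 1) + 2 * s * c.
Proof.
have s_neq0 := sqrt2_neq0; have two_neq0 := two_neq0.
by rewrite /QCv; split=> [<- | ->]; field.
Qed.

(* [(2 sqrt2 Q^C_v)^2 = 8 (x_v + x_{v+e1}) (x_v + x_{v+e2}) + Q^C] identically. *)
Lemma QCv11_sqr x a b : QC x a b = 0 -> QCv x a b 1 1 ^+ 2 = eH x a b * eV x a b.
Proof.
rewrite /QC /QCv /eH /eV => hQC.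
have eight_neq0 : 8 != 0 :> CC by rewrite pnatr_eq0.
rewrite expr_div_n; have -> : (2 * s) ^+ 2 = 8 by rewrite exprMn sqrt2_sqr; ring.
apply: (mulIf eight_neq0); rewrite divfK //.
by rewrite -[RHS]addr0 -hQC; ring.
Qed.

Section Square.
Variables (x : int -> int -> CC) (a b : int) (u w : CC).
Hypotheses (hu : u ^+ 2 = eH x a b) (hw : w ^+ 2 = eV x a b)
  (hq : QCv x a b 1 1 = u * w).

Let x11E : x (a + 1) (b + 1) = 3 * x a b + x (a + 1) b + x a (b + 1) + 2 * s * (u * w).
Proof. exact/QCv11E. Qed.
Let x10E : x (a + 1) b = u ^+ 2 - x a b. Proof. by rewrite hu /eH; ring. Qed.
Let x01E : x a (b + 1) = w ^+ 2 - x a b. Proof. by rewrite hw /eV; ring. Qed.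

Lemma square_solution :
  [/\ QC x a b = 0, (u + s * w) ^+ 2 = eH x a (b + 1) & (w + s * u) ^+ 2 = eV x (a + 1) b].
Proof.
have s2 := sqrt2_sqr.
by rewrite /QC /eH /eV x11E x10E x01E; split; ring: s2.
Qed.

Lemma square_corners :
  [/\ QCv x (a + 1) b (-1) 1 = - (u * (w + s * u)),
      QCv x a (b + 1) 1 (-1) = - ((u + s * w) * w)
    & QCv x (a + 1) (b + 1) (-1) (-1) = - ((u + s * w) * (w + s * u))].
Proof.
have s2 := sqrt2_sqr.
have two_s_neq0 : 2 * s != 0 by rewrite mulf_neq0 ?two_neq0 ?sqrt2_neq0.
rewrite /QCv !addrK x11E x10E x01E.
by split; apply: (mulIf two_s_neq0); rewrite divfK //; ring: s2.
Qed.
End Square.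

(* Row [j] of a solution: [h a] and [v a] are the values at the midpoints of the
   horizontal edge from (a, j) and of the vertical edge from (a, j). *)
Definition row_sol (x : int -> int -> CC) (j : int) (h v : int -> CC) := forall a,
  [/\ h a ^+ 2 = eH x a j, v a ^+ 2 = eV x a j, QCv x a j 1 1 = h a * v a
    & v (a + 1) = v a + s * h a].

Definition edge_sol (x h v : int -> int -> CC) := forall b,
  row_sol x b (h^~ b) (v^~ b) /\ forall a, h a (b + 1) = h a b + s * v a b.

Lemma row_solN x j h v :
  row_sol x j h v -> row_sol x j (fun a => - h a) (fun a => - v a).
Proof. by move=> R a; have [? ? q ->] := R a; split; rewrite ?sqrrN // ?q; ring. Qed.

Lemma prodQv_prodEdges_rows x j h v h' v' a :
  row_sol x j h v -> row_sol x (j + 1) h' v' ->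
  prodQv x (a + 1) (j + 1) + prodEdges x (a + 1) (j + 1) =
  h' a * h' (a + 1) * v (a + 1) ^+ 2 * v' (a + 1) ^+ 2
  * (h' a * h' (a + 1) - (h a + s * v a) * (h (a + 1) + s * v (a + 1))).
Proof.
move=> R R'.
have [ha va qa vaS] := R a; have [ha1 va1 qa1 _] := R (a + 1).
have [ha' va' qa' va'S] := R' a; have [ha1' va1' qa1' _] := R' (a + 1).
have [_ _ SW] := square_corners ha va qa.
have [_ SE _] := square_corners ha1 va1 qa1.
have [NW _ _] := square_corners ha' va' qa'.
have -> : prodEdges x (a + 1) (j + 1) =
          h' (a + 1) ^+ 2 * h' a ^+ 2 * v' (a + 1) ^+ 2 * v (a + 1) ^+ 2.
  by rewrite ha1' ha' va1' va1 /prodEdges /eH /eV !addrK; ring.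
by rewrite /prodQv qa1' NW SE SW -vaS -va'S; ring.
Qed.

Lemma edge_sol_QC_prodQv x h v : edge_sol x h v ->
  (forall a b, QC x a b = 0) /\ (forall a b, prodQv x a b = - prodEdges x a b).
Proof.
move=> sol; split=> a b.
  by have [ha va qa _] := (sol b).1 a; have [] := square_solution ha va qa.
have [R C] := sol (b - 1); have [R' _] := sol (b - 1 + 1).
have := prodQv_prodEdges_rows (a - 1) R R'; rewrite -!C subrr mulr0 !subrK.
by move/eqP; rewrite addr_eq0 => /eqP.
Qed.

Section Existence.
Variable x : int -> int -> CC.
Hypotheses (hQC : forall a b, QC x a b = 0)
  (hvertex : forall a b, prodQv x a b = - prodEdges x a b)
  (hedge : forall a b, eH x a b <> 0 /\ eV x a b <> 0).

Lemma eH_root_neq0 a b u : u ^+ 2 = eH x a b -> u != 0.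
Proof. by move=> hu; apply/eqP=> u0; apply: (hedge a b).1; rewrite -hu u0 expr0n. Qed.

Lemma eV_root_neq0 a b u : u ^+ 2 = eV x a b -> u != 0.
Proof. by move=> hu; apply/eqP=> u0; apply: (hedge a b).2; rewrite -hu u0 expr0n. Qed.

Lemma sqr_QCv_div a b w : w ^+ 2 = eV x a b -> (QCv x a b 1 1 / w) ^+ 2 = eH x a b.
Proof.
move=> hw; have w_neq0 := eV_root_neq0 hw.
by rewrite expr_div_n QCv11_sqr // -hw mulfK // expf_neq0.
Qed.

Definition row_step j a w := w + s * (QCv x a j 1 1 / w).

Lemma row_step_sqr j a w : w ^+ 2 = eV x a j -> row_step j a w ^+ 2 = eV x (a + 1) j.
Proof.
move=> hw; have hq : QCv x a j 1 1 = QCv x a j 1 1 / w * w.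
  by rewrite divfK // (eV_root_neq0 hw).
by have [] := square_solution (sqr_QCv_div hw) hw hq.
Qed.

Definition row_v j : int -> CC :=
  sign_chain -%R (fun a w w' => w' == row_step j a w) (fun a => sqrtC (eV x a j)).

Definition row_h j a := QCv x a j 1 1 / row_v j a.

Lemma row_sol_canonical j : row_sol x j (row_h j) (row_v j).
Proof.
have P_opp b w : w ^+ 2 = eV x b j -> (- w) ^+ 2 = eV x b j by rewrite sqrrN.
have step_sign b w w' : w ^+ 2 = eV x b j -> w' ^+ 2 = eV x (b + 1) j ->
    (w' == row_step j b w) || (- w' == row_step j b w).
  by move=> hw hw'; rewrite eqr_oppLR -eqf_sqr hw' row_step_sqr.
have step_opp b w w' : - w' == row_step j b w -> w' == row_step j b (- w).
  move=> /eqP hw'; suff -> : row_step j b (- w) = - row_step j b w by rewrite -hw' opprK.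
  by rewrite /row_step invrN !mulrN opprD.
move=> a; have [va /eqP va1] := sign_chainP (P := fun a w => w ^+ 2 = eV x a j)
  P_opp (fun b => sqrtCK (eV x b j)) step_sign step_opp a.
have va_neq0 := eV_root_neq0 va.
by split; rewrite ?sqr_QCv_div ?divfK ?va1.
Qed.

Lemma rows_compatible j h v h' v' : row_sol x j h v -> row_sol x (j + 1) h' v' ->
  h' 0 = h 0 + s * v 0 -> forall a, h' a = h a + s * v a.
Proof.
move=> R R'.
have step a : h' a = h a + s * v a <-> h' (a + 1) = h (a + 1) + s * v (a + 1).
  have [/eH_root_neq0 ha' _ _ _] := R' a.
  have [/eH_root_neq0 ha1' /eV_root_neq0 va1' _ _] := R' (a + 1).
  have [_ /eV_root_neq0 va1 _ _] := R (a + 1).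
  have /eqP := prodQv_prodEdges_rows a R R'.
  rewrite hvertex addNr eq_sym !mulf_eq0 subr_eq0.
  rewrite !(negbTE ha') !(negbTE ha1') !(negbTE va1) !(negbTE va1') /= => /eqP hT.
  split=> [e | e1]; first by apply: (mulfI ha'); rewrite hT e.
  by apply: (mulIf ha1'); rewrite hT e1.
move=> h0; elim/int_ind=> [//|n IH|n IH].
  by rewrite -addn1 PoszD; apply/(step n).1.
by apply/(step _).2; rewrite -addn1 PoszD opprD addrNK.
Qed.

Definition row_compat (j : int) (p p' : (int -> CC) * (int -> CC)) :=
  p'.1 0 == p.1 0 + s * p.2 0.

Definition row_opp (p : (int -> CC) * (int -> CC)) :=
  (fun a => - p.1 a, fun a => - p.2 a).

Definition rows := sign_chain row_opp row_compat (fun j => (row_h j, row_v j)).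

Lemma edge_sol_rows : edge_sol x (fun a b => (rows b).1 a) (fun a b => (rows b).2 a).
Proof.
have row_sign j p p' : row_sol x j p.1 p.2 -> row_sol x (j + 1) p'.1 p'.2 ->
    row_compat j p p' || row_compat j p (row_opp p').
  move=> R R'; have [h0 v0 q0 _] := R 0; have [h0' _ _ _] := R' 0.
  have [_ T0 _] := square_solution h0 v0 q0.
  by rewrite /row_compat eqr_oppLR -eqf_sqr h0' T0.
have compat_opp j p p' : row_compat j p (row_opp p') -> row_compat j (row_opp p) p'.
  by rewrite /row_compat /= eqr_oppLR opprD mulrN.
have rowsP := sign_chainP (opp := row_opp) (P := fun j p => row_sol x j p.1 p.2)
  (y := fun j => (row_h j, row_v j)) (fun j p => @row_solN x j p.1 p.2) row_sol_canonical
  row_sign compat_opp.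
move=> b; have [R C] := rowsP b; have [R' _] := rowsP (b + 1).
by split; [exact: R | exact: rows_compatible R R' (eqP C)].
Qed.
End Existence.

Definition extend (x h v : int -> int -> CC) (p q : int) : CC :=
  if (p %% 2)%Z == 1 then h (p %/ 2)%Z (q %/ 2)%Z
  else if (q %% 2)%Z == 1 then v (p %/ 2)%Z (q %/ 2)%Z
  else x (p %/ 2)%Z (q %/ 2)%Z.

Lemma modz_double (a : int) : ((2 * a) %% 2)%Z = 0.
Proof. by rewrite mulrC modzMl. Qed.
Lemma modz_double1 (a : int) : ((2 * a + 1) %% 2)%Z = 1.
Proof. by rewrite mulrC modzMDl. Qed.
Lemma divz_double (a : int) : ((2 * a) %/ 2)%Z = a.
Proof. by rewrite mulrC mulzK. Qed.
Lemma divz_double1 (a : int) : ((2 * a + 1) %/ 2)%Z = a.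
Proof. by rewrite mulrC divzMDl // addr0. Qed.

Lemma extend_vertex x h v a b : extend x h v (2 * a) (2 * b) = x a b.
Proof. by rewrite /extend !modz_double !divz_double. Qed.
Lemma extend_hedge x h v a b : extend x h v (2 * a + 1) (2 * b) = h a b.
Proof. by rewrite /extend modz_double1 divz_double1 divz_double. Qed.
Lemma extend_vedge x h v a b : extend x h v (2 * a) (2 * b + 1) = v a b.
Proof. by rewrite /extend modz_double modz_double1 divz_double divz_double1. Qed.

Lemma five_eqs_edge_sol xt x h v :
  (forall a b, xt (2 * a) (2 * b) = x a b) ->
  (forall a b, xt (2 * a + 1) (2 * b) = h a b) ->
  (forall a b, xt (2 * a) (2 * b + 1) = v a b) ->
  (forall a b, five_eqs xt a b) <-> edge_sol x h v.
Proof.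
move=> xt_x xt_h xt_v.
have double c : 2 * c + 2 = 2 * (c + 1) by rewrite mulrDr mulr1.
have fiveE a b : five_eqs xt a b <-> [/\ h a b ^+ 2 = eH x a b, v a b ^+ 2 = eV x a b,
    QCv x a b 1 1 = h a b * v a b, v (a + 1) b = v a b + s * h a b
  & h a (b + 1) = h a b + s * v a b].
  rewrite /five_eqs !double !xt_x !xt_h !xt_v -mulrA.
  by split=> [[/QCv11E]|[? ? /QCv11E]]; split.
split=> [sol b | sol a b]; last first.
  by have [/(_ a) [? ? ? ?] ?] := sol b; apply/fiveE; split.
by split=> a; have /fiveE[] := sol a b.
Qed.

Theorem theorem5p9 :
  (forall x : int -> int -> CC,
     (forall a b : int, QC x a b = 0) ->
     (forall a b : int, prodQv x a b = - prodEdges x a b) ->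
     (forall a b : int, x a b + x (a+1) b <> 0 /\ x a b + x a (b+1) <> 0) ->
     exists xt : int -> int -> CC,
       (forall a b : int, restrZ2 xt a b = x a b) /\
       (forall a b : int, five_eqs xt a b))
  /\
  (forall xt : int -> int -> CC,
     (forall a b : int, five_eqs xt a b) ->
     (forall a b : int, QC (restrZ2 xt) a b = 0) /\
     (forall a b : int, prodQv (restrZ2 xt) a b = - prodEdges (restrZ2 xt) a b)).
Proof.
split=> [x hQC hvertex hedge | xt five].
  exists (extend x (fun a b => (rows x b).1 a) (fun a b => (rows x b).2 a)).
  split=> [a b|]; first exact: extend_vertex.
  apply/(five_eqs_edge_sol (extend_vertex _ _ _) (extend_hedge _ _ _) (extend_vedge _ _ _)).
  exact: edge_sol_rows hQC hvertex hedge.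
apply: (@edge_sol_QC_prodQv _ (fun a b => xt (2 * a + 1) (2 * b))
                               (fun a b => xt (2 * a) (2 * b + 1))).
by apply/(five_eqs_edge_sol (x := restrZ2 xt)).
Qed.
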